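(* Let $(V,o)$ be a normal surface singularity with $p_f(V,o)>0$ and $Z^2=-2$, and let $\pi\colon X\to V$ be the minimal resolution. Assume that the fundamental cycle $Z$ is essentially irreducible and that $D_m=Z_{min}$, where $D_m$ is the smallest term of the Yau sequence for $Z$. Then $(V,o)$ is numerically Gorenstein and its canonical cycle is $Z_K=p_f(V,o)\,Y$, where $Y$ is the Yau cycle.
   Context: Let $\pi^{-1}(o)=\bigcup_{i=1}^n E_i$ be the decomposition of the exceptional set into irreducible components. A cycle is a divisor $D=\sum d_iE_i$ with $d_i\in\mathbb Z$; $D_1\le D_2$ means coefficientwise inequality, $D_1<D_2$ means $D_1\le D_2$ and $D_1\ne D_2$; $\mathrm{supp}\,D$ is the union of the $E_i$ with $d_i\neq0$. $K=K_X$ is the canonical divisor of $X$, and for a cycle $D>0$ its arithmetic genus is $p_a(D)=1+\frac12(D^2+D\cdot K)$. The fundamental cycle $Z$ is the smallest cycle $D>0$ with support $\pi^{-1}(o)$ such that $D\cdot E_i\le0$ for all $i$; $p_f(V,o)=p_a(Z)$ is the fundamental genus and $-Z^2$ the degree. For cycles $C$ and $D>0$, ''$\mathcal O_D(-C)$ is numerically trivial'' means $C\cdot E=0$ for every irreducible component $E\le D$. When $p_f(V,o)>0$, $Z_{min}$ denotes the unique minimal cycle $0<Z_{min}\le Z$ with $p_a(Z_{min})=p_a(Z)$. Yau sequence: if $D$ is a cycle that is the fundamental cycle on its own support, with $Z_{min}\le D$, $p_a(D)=p_f(V,o)$ and $D\cdot E=0$ for every component $E\le Z_{min}$, its Tyurina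 component is the unique maximal cycle $0<D'<D$ such that $\mathcal O_{D'}(-D)$ is numerically trivial and $p_a(D')=p_a(D)$ (it is again the fundamental cycle on its support). Put $D_1=Z$ and let $D_{i+1}$ be the Tyurina component of $D_i$ as long as $D_i\cdot E=0$ for all components $E\le Z_{min}$; the process stops at the first $D_m$ with $D_m\cdot Z_{min}<0$ ($m=1$ if $Z\cdot Z_{min}<0$). The sequence $0<D_m<\dots<D_1=Z$ is the Yau sequence, $m$ its length, and $Y=\sum_{i=1}^mD_i$ the Yau cycle. A $(-2)$-curve is an irreducible exceptional curve $E$ which is a smooth rational curve with $E^2=-2$. $Z$ is essentially irreducible if there is an irreducible component $A\le Z$ which is not a $(-2)$-curve such that, with $k$ the coefficient of $A$ in $Z$, either $Z=kA$ or every irreducible component of $Z-kA$ is a $(-2)$-curve. The canonical cycle $Z_K$ is the cycle with rational coefficients supported on $\pi^{-1}(o)$ satisfying $Z_K\cdot E_i=-K\cdot E_i$ for all $i$; $(V,o)$ is numerically Gorenstein if $Z_K$ has integer coefficients. *)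

(* Numerical model of the minimal resolution of a normal
   surface singularity: exceptional components E_0..E_{n-1}, intersection
   matrix M (M i j = E_i . E_j), arithmetic genera g i = p_a(E_i).
   K.E_i is given by adjunction: K.E_i = 2 p_a(E_i) - 2 - E_i^2. *)
From HB Require Import structures.
From mathcomp Require Import all_boot all_order all_algebra.
Set Implicit Arguments. Unset Strict Implicit. Unset Printing Implicit Defensive.
Import Order.TTheory GRing.Theory Num.Theory.
Local Open Scope ring_scope.

Definition icycle (n : nat) := {ffun 'I_n -> int}.

Definition zeroC (n : nat) : icycle n := [ffun _ => 0].

Definition compC (n : nat) (i : 'I_n) : icycle n := [ffun j => (j == i)%:R].

Definition inter (n : nat) (M : 'M[int]_n) (D1 D2 : icycle n) : int :=
  \sum_(i < n) \sum_(j < n) D1 i * D2 j * M i j.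

Definition KE (n : nat) (M : 'M[int]_n) (g : 'I_n -> nat) (i : 'I_n) : int :=
  2 * (g i)%:Z - 2 - M i i.

Definition Kdot (n : nat) (M : 'M[int]_n) (g : 'I_n -> nat) (D : icycle n) : int :=
  \sum_(i < n) D i * KE M g i.

Definition pa (n : nat) (M : 'M[int]_n) (g : 'I_n -> nat) (D : icycle n) : rat :=
  1 + (inter M D D + Kdot M g D)%:~R / 2.

Definition leC (n : nat) (D1 D2 : icycle n) : Prop := forall i, D1 i <= D2 i.
Definition ltC (n : nat) (D1 D2 : icycle n) : Prop := leC D1 D2 /\ D1 <> D2.
Definition posC (n : nat) (D : icycle n) : Prop := ltC (zeroC n) D.

Definition exc_config (n : nat) (M : 'M[int]_n) (g : 'I_n -> nat) : Prop :=
  (0 < n)%N /\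
  (forall i j, M i j = M j i) /\
  (forall i j, i != j -> 0 <= M i j) /\
  (forall D : icycle n, D <> zeroC n -> inter M D D < 0) /\
  (forall i j, connect (fun a b => (a != b) && (0 < M a b)) i j) /\
  (* minimality: no smooth rational (-1)-curves *)
  (forall i, ~ (g i = 0%N /\ M i i = -1)).

Definition antinef_on (n : nat) (M : 'M[int]_n) (S : pred 'I_n) (D : icycle n) :=
  [/\ posC D, (forall i, (D i != 0) = S i) & (forall i, S i -> inter M D (compC i) <= 0)].

Definition is_fundamental_on (n : nat) (M : 'M[int]_n) (S : pred 'I_n) (D : icycle n) :=
  antinef_on M S D /\ (forall D', antinef_on M S D' -> leC D D').

Definition is_fundamental_cycle (n : nat) (M : 'M[int]_n) (Z : icycle n) :=
  is_fundamental_on M predT Z.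

Definition is_Zmin (n : nat) (M : 'M[int]_n) (g : 'I_n -> nat) (Z Zm : icycle n) :=
  [/\ posC Zm, leC Zm Z, pa M g Zm = pa M g Z &
      forall D, posC D -> leC D Z -> pa M g D = pa M g Z -> leC Zm D].

(* O_D(-C) numerically trivial: C.E = 0 for every component E <= D *)
Definition num_trivial (n : nat) (M : 'M[int]_n) (C D : icycle n) :=
  forall i, 0 < D i -> inter M C (compC i) = 0.

Definition is_tyurina (n : nat) (M : 'M[int]_n) (g : 'I_n -> nat) (D D' : icycle n) :=
  [/\ posC D', ltC D' D, num_trivial M D D', pa M g D' = pa M g D &
      forall D'', posC D'' -> ltC D'' D -> num_trivial M D D'' ->
        pa M g D'' = pa M g D -> leC D'' D'].

(* D 0, ..., D (m-1) is the Yau sequence D_1 > ... > D_m for Z *)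
Definition is_yau_seq (n : nat) (M : 'M[int]_n) (g : 'I_n -> nat) (Z Zm : icycle n)
    (m : nat) (D : nat -> icycle n) :=
  [/\ (0 < m)%N, D 0%N = Z,
      (forall i, (i.+1 < m)%N -> num_trivial M (D i) Zm /\ is_tyurina M g (D i) (D i.+1))
    & inter M (D m.-1) Zm < 0].

Definition yau_cycle (n : nat) (m : nat) (D : nat -> icycle n) : icycle n :=
  [ffun j => \sum_(i < m) D i j].

Definition minus2_curve (n : nat) (M : 'M[int]_n) (g : 'I_n -> nat) (i : 'I_n) :=
  g i = 0%N /\ M i i = -2.

Definition ess_irreducible (n : nat) (M : 'M[int]_n) (g : 'I_n -> nat) (Z : icycle n) :=
  exists A : 'I_n, [/\ 0 < Z A, ~ minus2_curve M g A &
    let k := Z A in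
    (forall j, Z j = (if j == A then k else 0)) \/
    (forall j, Z j - (if j == A then k else 0) != 0 -> minus2_curve M g j)].

Definition is_canonical_cycle (n : nat) (M : 'M[int]_n) (g : 'I_n -> nat)
    (ZK : 'I_n -> rat) :=
  forall i, \sum_(j < n) ZK j * (M j i)%:~R = - (KE M g i)%:~R.

Definition num_gorenstein (n : nat) (M : 'M[int]_n) (g : 'I_n -> nat) :=
  (exists ZK, is_canonical_cycle M g ZK) /\
  forall ZK, is_canonical_cycle M g ZK -> forall i, exists z : int, ZK i = z%:~R.

(* The components other than [A] are (-2)-curves, so [K.X = X_A (K.A)] for
   every cycle [X], and [Z_K = p_f Y] amounts to [Y.E = 0] for [E != A]
   together with [Z_A (Y.A) = -2]; the latter follows from the former since
   distinct terms of the Yau sequence are orthogonal, whence [Z.Y = Z^2 = -2].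
   For the former, the tails [Y_i = D_i + ... + D_m] are shown orthogonal to
   the components [E != A] of [D_i] by descending induction on [i]. For
   [i = m] this is the minimality of [Z_min]. From [i+1] to [i] one expands
   [(D_i - D_{i+1}).(D_i + Y_{i+1}) = D_i^2 - D_{i+1}^2 = -(D_i - D_{i+1})_A K.A]
   componentwise: the maximality of Tyurina components and Laufer's inequality
   [p_a(X) <= p_a(Z)] give every term a sign, so all terms vanish. A drop of
   the coefficient of [A] forces [K.A = 1] and [Z_min.A = -1], and can only
   happen at the last step, where it is handled the same way. Finally [p_f] is
   an integer and [Z_K] is unique by negative definiteness. *)

From HB Require Import structures.
From mathcomp Require Import all_boot all_order all_algebra.
From mathcomp Require Import zify ring lra.
Import Order.TTheory GRing.Theory Num.Theory.
Set Implicit Arguments. Unset Strict Implicit. Unset Printing Implicit Defensive.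
Local Open Scope ring_scope.

Lemma mulz_eqN1 (a x : int) : 1 <= a -> a * x = -1 -> a = 1 /\ x = -1.
Proof.
move=> a_ge1 ax; have : a \is a intUnitRing.unitz.
  by apply: (@intUnitRing.unitzPl _ (- x)); rewrite mulNr mulrC ax opprK.
by nia.
Qed.

Section Resolution.

Variables (n : nat) (M : 'M[int]_n) (g : 'I_n -> nat).

Lemma cycleDE (X Y : icycle n) j : (X + Y) j = X j + Y j.
Proof. by rewrite ffunE. Qed.

Lemma cycleBE (X Y : icycle n) j : (X - Y) j = X j - Y j.
Proof. by rewrite !ffunE. Qed.

Lemma compCE (E j : 'I_n) : compC E j = (j == E)%:R.
Proof. by rewrite ffunE. Qed.

Lemma cycle_neq0P (X : icycle n) : reflect (exists j, X j != 0) (X != 0).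
Proof.
apply: (iffP idP) => [nzX|[j]]; last by apply: contraNneq => ->; rewrite ffunE.
apply/existsP; apply: contraNT nzX; rewrite negb_exists => /forallP X0.
by apply/eqP/ffunP => j; rewrite ffunE; apply/eqP/negPn/X0.
Qed.

Lemma posC_ge0 (X : icycle n) : posC X -> forall j, 0 <= X j.
Proof. by move=> [X0 _] j; have := X0 j; rewrite ffunE. Qed.

Lemma posC_neq0 (X : icycle n) : posC X -> X != 0.
Proof. by move=> [_ nzX]; apply/eqP => X0; apply: nzX; rewrite X0. Qed.

Lemma posCP (X : icycle n) : (forall j, 0 <= X j) -> X != 0 -> posC X.
Proof.
move=> X0 /eqP nzX; split; first by move=> j; rewrite ffunE.
by move=> X0'; apply: nzX; rewrite -X0'.
Qed.

Lemma compC_neq0 E : compC E != 0 :> icycle n.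
Proof. by apply/cycle_neq0P; exists E; rewrite compCE eqxx. Qed.

Definition dotc (X : icycle n) (i : 'I_n) : int := \sum_j X j * M j i.

Lemma inter_compC (X : icycle n) E : inter M X (compC E) = dotc X E.
Proof.
rewrite /inter /dotc; apply: eq_bigr => i _.
rewrite (bigD1 E) //= big1 ?addr0 => [|j /negbTE jE]; rewrite compCE ?eqxx ?mulr1 //.
by rewrite jE mulr0 mul0r.
Qed.

Lemma dotc_compC E i : dotc (compC E) i = M E i.
Proof.
rewrite /dotc (bigD1 E) //= big1 ?compCE ?eqxx ?mul1r ?addr0 // => j /negbTE jE.
by rewrite compCE jE mul0r.
Qed.

Lemma dotcD (X Y : icycle n) i : dotc (X + Y) i = dotc X i + dotc Y i.
Proof. by rewrite /dotc -big_split; apply: eq_bigr => j _; rewrite cycleDE mulrDl. Qed.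

Lemma dotcB (X Y : icycle n) i : dotc (X - Y) i = dotc X i - dotc Y i.
Proof. by rewrite /dotc -sumrB; apply: eq_bigr => j _; rewrite cycleBE mulrBl. Qed.

Lemma KdotD (X Y : icycle n) : Kdot M g (X + Y) = Kdot M g X + Kdot M g Y.
Proof. by rewrite /Kdot -big_split; apply: eq_bigr => i _; rewrite cycleDE mulrDl. Qed.

Lemma Kdot_compC E : Kdot M g (compC E) = KE M g E.
Proof.
rewrite /Kdot (bigD1 E) //= big1 ?compCE ?eqxx ?mul1r ?addr0 // => j /negbTE jE.
by rewrite compCE jE mul0r.
Qed.

Hypothesis M_sym : forall i j, M i j = M j i.

Lemma interE (X Y : icycle n) : inter M X Y = \sum_i X i * dotc Y i.
Proof.
rewrite /inter /dotc; apply: eq_bigr => i _; rewrite mulr_sumr.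
by apply: eq_bigr => j _; rewrite M_sym mulrA.
Qed.

Lemma interC (X Y : icycle n) : inter M X Y = inter M Y X.
Proof.
rewrite /inter exchange_big; apply: eq_bigr => i _; apply: eq_bigr => j _.
by rewrite M_sym [X j * _]mulrC.
Qed.

Lemma interDl (X Y W : icycle n) : inter M (X + Y) W = inter M X W + inter M Y W.
Proof. by rewrite !interE -big_split; apply: eq_bigr => i _; rewrite cycleDE mulrDl. Qed.

Lemma interBl (X Y W : icycle n) : inter M (X - Y) W = inter M X W - inter M Y W.
Proof. by rewrite !interE -sumrB; apply: eq_bigr => i _; rewrite cycleBE mulrBl. Qed.

Lemma inter_dotcD (W X Y : icycle n) :
  \sum_E W E * (dotc X E + dotc Y E) = inter M W X + inter M W Y.
Proof. by rewrite !interE -big_split; apply: eq_bigr => E _; rewrite mulrDr. Qed.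

(* [adj X = X^2 + K.X = 2 p_a(X) - 2] *)
Definition adj (X : icycle n) : int := inter M X X + Kdot M g X.

Lemma paE (X : icycle n) : pa M g X = 1 + (adj X)%:~R / 2.
Proof. by []. Qed.

Lemma pa_adj (X Y : icycle n) : (pa M g X = pa M g Y) <-> (adj X = adj Y).
Proof.
rewrite !paE; split=> [|-> //] /addrI /(congr1 ( *%R^~ 2)).
by rewrite !divfK // => /eqP; rewrite eqr_int => /eqP.
Qed.

Lemma adjD (X Y : icycle n) : adj (X + Y) = adj X + adj Y + 2 * inter M X Y.
Proof.
rewrite /adj !interDl ![inter M _ (_ + _)]interC !interDl KdotD (interC Y X); ring.
Qed.

Lemma adj_compC E : adj (compC E) = 2 * (g E)%:Z - 2.
Proof. rewrite /adj Kdot_compC inter_compC dotc_compC /KE; ring. Qed.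

Lemma adjDc (X : icycle n) E :
  adj (X + compC E) = adj X + 2 * (g E)%:Z - 2 + 2 * dotc X E.
Proof. by rewrite adjD adj_compC inter_compC; ring. Qed.

Lemma adjBc (X : icycle n) E :
  adj (X - compC E) = adj X - 2 * (g E)%:Z + 2 - 2 * dotc X E + 2 * M E E.
Proof. by have := adjDc (X - compC E) E; rewrite subrK dotcB dotc_compC => ->; ring. Qed.

Definition weight (X : icycle n) : nat := \sum_i `|X i|%N.

Lemma weight_lt (X Y : icycle n) E :
  (forall i, i != E -> `|X i|%N = `|Y i|%N) -> (`|X E| < `|Y E|)%N ->
  (weight X < weight Y)%N.
Proof.
move=> XY XYE; rewrite /weight (bigD1 E) //= [X in (_ < X)%N](bigD1 E) //=.
by rewrite (eq_bigr (fun i => `|Y i|%N)) => [|i /XY //]; rewrite ltn_add2r.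
Qed.

Lemma adj_even (X : icycle n) : (forall j, 0 <= X j) -> exists t, adj X = 2 * t.
Proof.
move=> X0; have [k] := ubnP (weight X); elim: k X X0 => // k IH X X0 hk.
case: (pickP (fun i => 0 < X i)) => [E /= XE | X0'].
- have X'0 j : 0 <= (X - compC E) j.
    by rewrite cycleBE compCE; have [->|_] := eqVneq j E; rewrite /= ?subr0 //; lia.
  have lt : (weight (X - compC E)%R < weight X)%N.
    apply: (weight_lt (E := E)) => [i /negbTE iE|]; rewrite cycleBE compCE ?iE ?subr0 //.
    by rewrite eqxx /=; lia.
  have [t ht] := IH _ X'0 (leq_trans lt (ltnSE hk)).
  rewrite -(subrK (compC E) X) adjDc ht.
  by exists (t + (g E)%:Z - 1 + dotc (X - compC E) E); ring.
- have -> : X = 0.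
    by apply/ffunP => i; rewrite ffunE; have := X0' i; have := X0 i => /=; lia.
  by exists 0; rewrite /adj /Kdot interE !big1 // => i _; rewrite ffunE mul0r.
Qed.

Hypothesis M_offdiag_ge0 : forall i j, i != j -> 0 <= M i j.

Lemma dotc_ge0 (X : icycle n) i : (forall j, 0 <= X j) -> X i = 0 -> 0 <= dotc X i.
Proof.
move=> X0 Xi; apply: sumr_ge0 => j _.
have [->|ji] := eqVneq j i; first by rewrite Xi mul0r.
by apply: mulr_ge0 => //; apply: M_offdiag_ge0.
Qed.

Lemma dotc_le (X Y : icycle n) i :
  (forall j, X j <= Y j) -> X i = Y i -> dotc X i <= dotc Y i.
Proof.
move=> XY XYi; rewrite -subr_ge0 -dotcB; apply: dotc_ge0 => [j|]; rewrite cycleBE.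
  by rewrite subr_ge0.
by rewrite XYi subrr.
Qed.

Lemma inter_num_trivial (X C : icycle n) :
  (forall j, 0 <= X j) -> num_trivial M C X -> inter M X C = 0.
Proof.
move=> X0 CX; rewrite interE big1 // => i _.
have := X0 i; rewrite le0r => /orP[/eqP->|Xi]; first by rewrite mul0r.
by rewrite -inter_compC CX // mulr0.
Qed.

Hypothesis M_connected : forall i j, connect (fun a b => (a != b) && (0 < M a b)) i j.

Lemma antinef_full_support (X : icycle n) :
  (forall j, 0 <= X j) -> X != 0 -> (forall E, dotc X E <= 0) -> forall E, 0 < X E.
Proof.
move=> X0 /cycle_neq0P [j0 Xj0] Xanti E.
have {Xj0} : 0 < X j0 by rewrite lt0r Xj0 X0.
have /connectP [p] := M_connected j0 E.
elim: p j0 => [|x p IH] j0 /=; first by move=> _ ->.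
move=> /andP[/andP[j0x Mj0x] path_p] Ep Xj0; apply: IH path_p Ep _.
rewrite lt0r X0 andbT; apply/eqP => Xx.
have : X j0 * M j0 x <= dotc X x.
  rewrite /dotc (bigD1 j0) //= lerDl; apply: sumr_ge0 => l _.
  have [->|lx] := eqVneq l x; first by rewrite Xx mul0r.
  by apply: mulr_ge0 => //; apply: M_offdiag_ge0.
by have := Xanti x; have := mulr_gt0 Xj0 Mj0x; lia.
Qed.

Hypothesis M_negdef : forall X : icycle n, X != 0 -> inter M X X < 0.

(* Clear denominators and use negative definiteness over [int]. *)
Lemma rat_cycle_eq0 (W : 'I_n -> rat) :
  (forall i, \sum_j W j * (M j i)%:~R = 0) -> forall i, W i = 0.
Proof.
move=> WM i0.
pose N : int := \prod_j denq (W j).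
have N_gt0 : 0 < N by apply: prodr_gt0 => j _; exact: denq_gt0.
pose X : icycle n := [ffun j => numq (W j) * \prod_(l | l != j) denq (W l)].
have XW j : (X j)%:~R = W j * N%:~R :> rat.
  rewrite ffunE /N [P in _ = _ * P%:~R](bigD1 j) //= !intrM.
  have den0 : (denq (W j))%:~R != 0 :> rat by rewrite intr_eq0 gt_eqF // denq_gt0.
  have WE := divq_num_den (W j).
  set a := (numq (W j))%:~R in WE *; set b := (denq (W j))%:~R in WE den0 *.
  by rewrite -WE; field.
have dotX i : dotc X i = 0.
  apply: (@intr_inj rat); rewrite /dotc rmorph_sum /=.
  under eq_bigr do rewrite intrM XW mulrAC.
  by rewrite -mulr_suml WM mul0r.
have /eqP X0 : X == 0.
  apply: contraT => /M_negdef; rewrite interE big1 ?ltxx // => l _.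
  by rewrite dotX mulr0.
move/eqP: (XW i0); rewrite X0 ffunE eq_sym mulf_eq0 intr_eq0 (gt_eqF N_gt0) orbF.
by move/eqP.
Qed.

(* The positive part [P] of such a cycle has [P^2 >= 0], hence vanishes. *)
Lemma le0_of_dotc_pos_ge0 (W : icycle n) :
  (forall E, 0 < W E -> 0 <= dotc W E) -> forall E, W E <= 0.
Proof.
move=> WE.
pose P : icycle n := [ffun j => if 0 <= W j then W j else 0].
pose N : icycle n := [ffun j => if 0 <= - W j then - W j else 0].
have PE j : P j = if 0 <= W j then W j else 0 by rewrite ffunE.
have NE j : N j = if 0 <= - W j then - W j else 0 by rewrite ffunE.
have PWN : P = W + N.
  by apply/ffunP => j; rewrite cycleDE PE NE; case: ifPn => h1; case: ifPn => h2; lia.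
suff /eqP P0 : P == 0 by move=> E; have := PE E; rewrite P0 ffunE; case: ifPn => h1; lia.
have : 0 <= inter M P P.
  rewrite interE; apply: sumr_ge0 => E _; rewrite PE.
  case: ifPn => [W0|_]; last by rewrite mul0r.
  have [->|WEpos] := eqVneq (W E) 0; first by rewrite mul0r.
  have N0 j : 0 <= N j by rewrite NE; case: ifPn => h1; lia.
  have NE0 : N E = 0 by rewrite NE; case: ifPn => h1; lia.
  rewrite PWN dotcD; apply: mulr_ge0 => //; apply: addr_ge0; last exact: dotc_ge0.
  by apply: WE; rewrite lt_neqAle eq_sym WEpos.
by apply: contraLR => /M_negdef; rewrite -ltNge.
Qed.

Variable Z : icycle n.
Hypothesis Z_fundamental : is_fundamental_cycle M Z.

Lemma fundamental_antinef E : dotc Z E <= 0.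
Proof. by case: Z_fundamental => -[_ _ Zanti] _; rewrite -inter_compC; apply: Zanti. Qed.

Lemma fundamental_gt0 i : 0 < Z i.
Proof.
case: Z_fundamental => -[Zpos Zsupp _] _.
by rewrite lt0r (Zsupp i) (posC_ge0 Zpos).
Qed.

Lemma addc_between (X : icycle n) E :
  (forall j, 0 <= X j) -> (forall j, X j <= Z j) -> X E < Z E ->
  [/\ forall j, 0 <= (X + compC E) j, forall j, (X + compC E) j <= Z j
    & X + compC E != 0].
Proof.
move=> X0 XZ XE; split=> [j|j|]; rewrite ?cycleDE ?compCE.
- by have := X0 j; case: (j == E) => /=; lia.
- by have := XZ j; have [->|_] := eqVneq j E => /=; lia.
- by apply/cycle_neq0P; exists E; rewrite cycleDE compCE eqxx /=; have := X0 E; lia.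
Qed.

(* Laufer's computation sequence: add components [E] with [X.E > 0] until
   [X] is anti-nef, hence equal to [Z]; [adj] never decreases on the way. *)
Lemma adj_le_fundamental (X : icycle n) :
  (forall j, 0 <= X j) -> (forall j, X j <= Z j) -> X != 0 -> adj X <= adj Z.
Proof.
move=> X0 XZ nzX; have [k] := ubnP (weight (Z - X)).
elim: k X X0 XZ nzX => // k IH X X0 XZ nzX hk.
case: (pickP (fun E => 0 < dotc X E)) => [E /= XE | Xanti].
- have XEZ : X E < Z E.
    rewrite lt_neqAle XZ andbT; apply/eqP => XZE.
    by have := dotc_le XZ XZE; have := fundamental_antinef E; lia.
  have [X'0 X'Z nzX'] := addc_between X0 XZ XEZ.
  have lt : (weight (Z - (X + compC E))%R < weight (Z - X)%R)%N.
    apply: (weight_lt (E := E)) => [j /negbTE jE|]; rewrite !cycleBE cycleDE compCE.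
      by rewrite jE addr0.
    by rewrite eqxx /=; lia.
  by have := IH _ X'0 X'Z nzX' (leq_trans lt (ltnSE hk)); rewrite adjDc; lia.
- have {}Xanti E : dotc X E <= 0 by have := Xanti E; rewrite /= leNgt => ->.
  have Xpos := antinef_full_support X0 nzX Xanti.
  have ZX : leC Z X.
    apply: Z_fundamental.2; split=> [|i|i _]; last by rewrite inter_compC.
    - exact: posCP.
    - by rewrite lt0r_neq0.
  suff -> : X = Z by [].
  by apply/ffunP => i; apply/eqP; rewrite eq_le ZX XZ.
Qed.

Lemma adj_addc_le (X : icycle n) E :
  (forall j, 0 <= X j) -> (forall j, X j <= Z j) -> X E < Z E ->
  adj (X + compC E) <= adj Z.
Proof.
by move=> X0 XZ XE; have [] := addc_between X0 XZ XE; apply: adj_le_fundamental.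
Qed.

Lemma subc_between (X : icycle n) E E' :
  (forall j, 0 <= X j) -> (forall j, X j <= Z j) -> 0 < X E -> E' != E -> 0 < X E' ->
  [/\ forall j, 0 <= (X - compC E) j, forall j, (X - compC E) j <= Z j
    & X - compC E != 0].
Proof.
move=> X0 XZ XE E'E XE'; split=> [j|j|]; rewrite ?cycleBE ?compCE.
- by have := X0 j; have [->|_] := eqVneq j E => /=; lia.
- by have := XZ j; case: (j == E) => /=; lia.
- apply/cycle_neq0P; exists E'; rewrite cycleBE compCE (negbTE E'E) subr0.
  exact: lt0r_neq0.
Qed.

Lemma adj_subc_le (X : icycle n) E E' :
  (forall j, 0 <= X j) -> (forall j, X j <= Z j) -> 0 < X E -> E' != E -> 0 < X E' ->
  adj (X - compC E) <= adj Z.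
Proof.
move=> X0 XZ XE E'E XE'.
by have [] := subc_between X0 XZ XE E'E XE'; apply: adj_le_fundamental.
Qed.

Variables (Zm : icycle n) (m : nat) (D : nat -> icycle n).
Hypothesis D_yau : is_yau_seq M g Z Zm m D.

Lemma yau_size_gt0 : (0 < m)%N. Proof. by case: D_yau. Qed.

Lemma yau_head : D 0 = Z. Proof. by case: D_yau. Qed.

Lemma yau_tyurina i : (i.+1 < m)%N -> is_tyurina M g (D i) (D i.+1).
Proof. by case: D_yau => _ _ h _ /h []. Qed.

Lemma yau_num_trivial_Zmin i : (i.+1 < m)%N -> num_trivial M (D i) Zm.
Proof. by case: D_yau => _ _ h _ /h []. Qed.

Lemma yau_le i j : (i <= j)%N -> (j < m)%N -> forall E, D j E <= D i E.
Proof.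
elim: j => [|j IH]; first by rewrite leqn0 => /eqP ->.
rewrite leq_eqVlt => /orP[/eqP -> //|ij] jm E.
have [_ [le _] _ _ _] := yau_tyurina jm.
by apply: le_trans (le E) _; apply: IH => //; apply: ltnW.
Qed.

Lemma yau_bounds i : (i < m)%N ->
  [/\ forall j, 0 <= D i j, forall j, D i j <= Z j, adj (D i) = adj Z & D i != 0].
Proof.
move=> im; have Dpos : posC (D i).
  case: i im => [_|i im]; first by rewrite yau_head; case: Z_fundamental => -[].
  by case: (yau_tyurina im).
split; [exact: posC_ge0 | | | exact: posC_neq0].
- by move=> j; rewrite -yau_head; apply: yau_le.
- elim: i im {Dpos} => [|i IH im]; first by rewrite yau_head.
  have [_ _ _ pa_eq _] := yau_tyurina im.
  by rewrite -IH; [apply/pa_adj | exact: ltnW].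
Qed.

Lemma yau_coefP i E : (i < m)%N -> 0 < D i E \/ D i E = 0.
Proof.
move=> im; have [D0 _ _ _] := yau_bounds im.
by have := D0 E; rewrite le0r => /orP[/eqP|]; [right | left].
Qed.

Lemma yau_dotc_supp i l E : (i < l)%N -> (l < m)%N -> 0 < D l E -> dotc (D i) E = 0.
Proof.
move=> il lm DlE; have [_ _ triv _ _] := yau_tyurina (leq_ltn_trans il lm).
by rewrite -inter_compC; apply: triv; apply: lt_le_trans DlE (yau_le il lm E).
Qed.

Lemma yau_orthogonal i l : (i < m)%N -> (l < m)%N -> i != l -> inter M (D i) (D l) = 0.
Proof.
have key i' l' : (i' < l')%N -> (l' < m)%N -> inter M (D l') (D i') = 0.
  move=> il lm; have [D0 _ _ _] := yau_bounds lm.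
  by apply: inter_num_trivial => // E DE; rewrite inter_compC; apply: yau_dotc_supp DE.
move=> im lm; case: (ltngtP i l) => [il|li|->] // _; last exact: key.
by rewrite interC; apply: key.
Qed.

Lemma tyurina_maximal i (X : icycle n) : (i.+1 < m)%N ->
  (forall j, 0 <= X j) -> (forall j, X j <= D i j) ->
  (forall j, 0 < X j -> dotc (D i) j = 0) -> adj X = adj Z -> X != 0 ->
  forall j, X j <= D i.+1 j.
Proof.
move=> im X0 XD Xtriv adjX nzX.
have [Di0 _ adjDi nzDi] := yau_bounds (ltnW im).
have [_ _ _ _ Dmax] := yau_tyurina im.
have triv : num_trivial M (D i) X by move=> j Xj; rewrite inter_compC; apply: Xtriv.
have neqX : X <> D i.
  by move=> XDi; have := M_negdef nzDi; rewrite -{1}XDi inter_num_trivial // XDi.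

by apply: Dmax => //; [exact: posCP | apply/pa_adj; rewrite adjX adjDi].
Qed.

(* [D_{i+1} + E] would be a larger candidate for the Tyurina component. *)
Lemma tyurina_no_addc i E : (i.+1 < m)%N -> D i.+1 E < D i E -> dotc (D i) E = 0 ->
  adj (D i.+1 + compC E) != adj Z.
Proof.
move=> im lt DiE; apply/eqP => adjX.
have [Di10 _ _ _] := yau_bounds im.
pose X := D i.+1 + compC E.
have XE j : X j = D i.+1 j + (j == E)%:R by rewrite cycleDE compCE.
have X0 j : 0 <= X j by rewrite XE; have := Di10 j; case: (j == E) => /=; lia.
have XD j : X j <= D i j.
  rewrite XE; have [->|_] := eqVneq j E => /=; first by lia.
  by rewrite addr0; apply: yau_le.
have triv j : 0 < X j -> dotc (D i) j = 0.
  rewrite XE; have [->|_] := eqVneq j E => //= Dj.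
  by apply: yau_dotc_supp (ltnSn i) im _; rewrite -(addr0 (D i.+1 j)).
have nzX : X != 0 by apply/cycle_neq0P; exists E; rewrite XE eqxx /=; have := Di10 E; lia.
by have := tyurina_maximal im X0 XD triv adjX nzX E; rewrite XE eqxx /=; lia.
Qed.

Lemma yau_antinef i : (i < m)%N -> forall E, 0 < D i E -> dotc (D i) E <= 0.
Proof.
elim: i => [_|i IH im] E DE; first by rewrite yau_head; apply: fundamental_antinef.
rewrite leNgt; apply/negP => dotE.
have [_ DZ _ _] := yau_bounds (ltnW im); have [D'0 D'Z adjD' _] := yau_bounds im.
have [_ [le _] _ _ _] := yau_tyurina im.
have DiE : dotc (D i) E = 0 := yau_dotc_supp (ltnSn i) im DE.
have lt : D i.+1 E < D i E.
  rewrite lt_neqAle (le E) andbT; apply/eqP => eqE.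
  by have := dotc_le le eqE; rewrite DiE; move: dotE; lia.
have := adj_addc_le D'0 D'Z (lt_le_trans lt (DZ E)).
have /negP := tyurina_no_addc im lt DiE.
by rewrite adjDc adjD'; move: dotE; lia.
Qed.

Variable A : 'I_n.
Hypothesis A_not_minus2 : ~ minus2_curve M g A.
Hypothesis others_minus2 : forall j, j != A -> minus2_curve M g j.
Hypothesis no_minus1_curve : forall i, ~ (g i = 0%N /\ M i i = -1).

Local Notation kA := (KE M g A).

Lemma KE_minus2 j : j != A -> KE M g j = 0.
Proof. by move=> /others_minus2 [gj Mjj]; rewrite /KE gj Mjj. Qed.

Lemma KdotE (X : icycle n) : Kdot M g X = X A * kA.
Proof.
by rewrite /Kdot (bigD1 A) //= big1 ?addr0 // => j /KE_minus2 ->; rewrite mulr0.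
Qed.

Lemma adjE (X : icycle n) : adj X = inter M X X + X A * kA.
Proof. by rewrite /adj KdotE. Qed.

Lemma KE_A_ge1 : 1 <= kA.
Proof.
have MAA : M A A < 0 by have := M_negdef (compC_neq0 A); rewrite inter_compC dotc_compC.
rewrite /KE; have [gA0|] := eqVneq (g A) 0%N; last by lia.
have MAA1 : M A A != -1 by apply/eqP => MAA1; apply: (@no_minus1_curve A).
have MAA2 : M A A != -2 by apply/eqP => MAA2; apply: A_not_minus2.
by rewrite gA0; lia.
Qed.

Hypothesis pa_Z_gt0 : 0 < pa M g Z.
Hypothesis Z_sq : inter M Z Z = -2.

Lemma adj_Z_ge0 : 0 <= adj Z.
Proof.
have : (-2 : rat) < (adj Z)%:~R by move: pa_Z_gt0; rewrite paE; lra.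
have [t ->] := adj_even (fun j => ltW (fundamental_gt0 j)).
by rewrite -[-2]/((-2)%:~R) ltr_int; lia.
Qed.

Lemma adj_ZE : adj Z = Z A * kA - 2.
Proof. by rewrite adjE Z_sq addrC. Qed.

Lemma yau_A_gt0 i : (i < m)%N -> 0 < D i A.
Proof.
move=> im; have [D0 _ adjD nzD] := yau_bounds im.
rewrite lt0r D0 andbT; apply/eqP => DA.
have := M_negdef nzD; have := adj_Z_ge0; move: adjD; rewrite adjE DA mul0r addr0; lia.
Qed.

Hypothesis Zm_min : is_Zmin M g Z Zm.
Hypothesis yau_last : D m.-1 = Zm.

Lemma yau_last_lt : (m.-1 < m)%N.
Proof. by rewrite prednK // yau_size_gt0. Qed.

Lemma Zmin_bounds :
  [/\ forall j, 0 <= Zm j, forall j, Zm j <= Z j, adj Zm = adj Z & Zm != 0].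
Proof. by rewrite -yau_last; apply: yau_bounds yau_last_lt. Qed.

Lemma Zmin_le_yau i E : (i < m)%N -> Zm E <= D i E.
Proof.
move=> im; rewrite -yau_last; apply: yau_le yau_last_lt _.
by rewrite -ltnS prednK ?yau_size_gt0.
Qed.

(* Removing a (-2)-curve [E] with [Zm.E < 0] would keep [p_a], against the
   minimality of [Zm]. *)
Lemma Zmin_dotc_eq0 E : E != A -> 0 < Zm E -> dotc Zm E = 0.
Proof.
move=> EA ZmE; have [gE MEE] := others_minus2 EA.
have [Zm0 ZmZ adjZm _] := Zmin_bounds.
have ZmA : 0 < Zm A by rewrite -yau_last yau_A_gt0 ?yau_last_lt.
have AE : A != E by rewrite eq_sym.
have : dotc Zm E <= 0 by rewrite -yau_last yau_antinef ?yau_last_lt ?yau_last.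
rewrite le_eqVlt => /orP[/eqP // | ZmE_lt0].
have [X0 XZ nzX] := subc_between Zm0 ZmZ ZmE AE ZmA.
have adjX : adj (Zm - compC E) = adj Z.
  apply/eqP; rewrite eq_le adj_le_fundamental //=.
  by rewrite adjBc gE MEE adjZm; lia.
case: Zm_min => _ _ _ Zm_le.
have := Zm_le _ (posCP X0 nzX) XZ (proj2 (pa_adj _ _) adjX) E.
by rewrite cycleBE compCE eqxx /=; lia.
Qed.

Lemma Zmin_self_inter : inter M Zm Zm = Zm A * dotc Zm A.
Proof.
have [Zm0 _ _ _] := Zmin_bounds.
rewrite interE (bigD1 A) //= big1 ?addr0 // => j jA.
have := Zm0 j; rewrite le0r => /orP[/eqP->|Zmj]; first by rewrite mul0r.
by rewrite Zmin_dotc_eq0 // mulr0.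
Qed.

Definition yau_tail i : icycle n := [ffun E => \sum_(i <= j < m) D j E].

Lemma dotc_yau_tail i E : dotc (yau_tail i) E = \sum_(i <= j < m) dotc (D j) E.
Proof.
rewrite /dotc; under eq_bigr do rewrite ffunE mulr_suml.
by rewrite exchange_big.
Qed.

Lemma inter_yau_tail (X : icycle n) i :
  inter M X (yau_tail i) = \sum_(i <= j < m) inter M X (D j).
Proof.
rewrite interE; under eq_bigr do rewrite dotc_yau_tail mulr_sumr.
by rewrite exchange_big; apply: eq_bigr => j _; rewrite interE.
Qed.

Lemma dotc_yau_tail_S i E : (i < m)%N ->
  dotc (yau_tail i) E = dotc (D i) E + dotc (yau_tail i.+1) E.
Proof. by move=> im; rewrite !dotc_yau_tail big_ltn. Qed.

Lemma dotc_yau_tail_ge0 k i E : (k < m)%N -> (k <= i)%N -> D k E = 0 ->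
  0 <= dotc (yau_tail i) E.
Proof.
move=> km ki DkE; rewrite dotc_yau_tail big_nat; apply: sumr_ge0 => j /andP[ij jm].
have [D0 _ _ _] := yau_bounds jm; apply: dotc_ge0 => //.
by have := yau_le (leq_trans ki ij) jm E; have := D0 E; lia.
Qed.

Definition tail_perp i := forall E, E != A -> 0 < D i E -> dotc (yau_tail i) E = 0.

Lemma tail_perp_last : tail_perp m.-1.
Proof.
move=> E EA; rewrite yau_last => ZmE.
rewrite dotc_yau_tail -{2}(prednK yau_size_gt0) big_nat1 yau_last.
exact: Zmin_dotc_eq0.
Qed.

Section Step.

Variable i : nat.
Hypothesis im : (i.+1 < m)%N.

Lemma dotc_new_component_le0 E : E != A -> 0 < D i E -> D i.+1 E = 0 ->
  dotc (D i) E + dotc (D i.+1) E <= 0.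
Proof.
move=> EA DiE Di1E; have [gE MEE] := others_minus2 EA.
have [Di0 DiZ adjDi _] := yau_bounds (ltnW im).
have [Di10 Di1Z adjDi1 _] := yau_bounds im.
have := yau_antinef (ltnW im) DiE.
have : 0 <= dotc (D i.+1) E by apply: dotc_ge0.
have AE : A != E by rewrite eq_sym.
have := adj_subc_le Di0 DiZ DiE AE (yau_A_gt0 (ltnW im)).
have Di1EZ : D i.+1 E < Z E by rewrite Di1E fundamental_gt0.
have := adj_addc_le Di10 Di1Z Di1EZ.
have no_add : dotc (D i) E = 0 -> adj (D i.+1 + compC E) != adj Z.
  by move=> dotDi0; apply: tyurina_no_addc => //; rewrite Di1E.
move: no_add; rewrite !adjDc adjBc gE MEE adjDi adjDi1.
by lia.
Qed.

Lemma yau_diff_term_le0 E : E != A ->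
  (D i - D i.+1) E * (dotc (D i) E + dotc (D i.+1) E) <= 0.
Proof.
move=> EA; rewrite cycleBE.
have [Di1E|Di1E] := yau_coefP E im.
  rewrite (yau_dotc_supp (ltnSn i) im Di1E) add0r; apply: mulr_ge0_le0.
    by rewrite subr_ge0 yau_le.
  exact: yau_antinef.
have [DiE|->] := yau_coefP E (ltnW im); last by rewrite Di1E subrr mul0r.
apply: mulr_ge0_le0; first by rewrite Di1E subr0 ltW.
exact: dotc_new_component_le0.
Qed.

Lemma yau_diff_inter :
  inter M (D i - D i.+1) (D i) + inter M (D i - D i.+1) (D i.+1) =
  - ((D i A - D i.+1 A) * kA).
Proof.
have orth : inter M (D i) (D i.+1) = 0.
  by apply: yau_orthogonal => //; [exact: ltnW | rewrite neq_ltn ltnSn].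
have [_ _ adjDi _] := yau_bounds (ltnW im); have [_ _ adjDi1 _] := yau_bounds im.
move: adjDi; rewrite -adjDi1 !adjE !interBl orth (interC (D i.+1)) orth; nia.
Qed.

Lemma yau_diff_inter_tail :
  inter M (D i - D i.+1) (yau_tail i.+1) = inter M (D i - D i.+1) (D i.+1).
Proof.
rewrite inter_yau_tail big_ltn // big_nat big1 ?addr0 // => j /andP[ij jm].
by rewrite interBl !yau_orthogonal ?subrr //; lia.
Qed.

Lemma dotc_new_component_eq0 E :
  (D i A - D i.+1 A) * (kA + dotc (D i.+1) A) = 0 ->
  E != A -> 0 < D i E -> D i.+1 E = 0 -> dotc (D i) E + dotc (D i.+1) E = 0.
Proof.
move=> FA0 EA DiE Di1E.
pose T E' := (D i - D i.+1) E' * (dotc (D i) E' + dotc (D i.+1) E').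
have sumT : \sum_(E' | E' != A) - T E' = 0.
  move: yau_diff_inter; rewrite -inter_dotcD (bigD1 A) //= cycleBE.
  rewrite (yau_dotc_supp (ltnSn i) im (yau_A_gt0 im)) add0r => sum.
  rewrite sumrN; apply/eqP; rewrite oppr_eq0; apply/eqP.
  apply: (addrI ((D i A - D i.+1 A) * dotc (D i.+1) A)); rewrite sum addr0; nia.
have T_le0 E' : E' != A -> 0 <= - T E' by rewrite oppr_ge0; apply: yau_diff_term_le0.
have := psumr_eq0P T_le0 sumT EA.
by move/eqP; rewrite oppr_eq0 /T cycleBE Di1E subr0 mulf_eq0 (gt_eqF DiE) => /eqP.
Qed.


Lemma tail_perp_step_flat : D i A = D i.+1 A -> tail_perp i.+1 -> tail_perp i.
Proof.
move=> flatA IH E EA DiE.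
rewrite dotc_yau_tail_S; last exact: ltnW.
have [Di1E|Di1E] := yau_coefP E im.
  by rewrite (yau_dotc_supp (ltnSn i) im Di1E) IH.
have new0 E' : E' != A -> 0 < D i E' -> D i.+1 E' = 0 ->
    dotc (D i) E' + dotc (D i.+1) E' = 0.
  by apply: dotc_new_component_eq0; rewrite flatA subrr mul0r.
pose T E' := (D i - D i.+1) E' * (dotc (D i) E' + dotc (yau_tail i.+1) E').
have T_ge0 E' : 0 <= T E'.
  rewrite /T cycleBE; have [Di1E'|Di1E'] := yau_coefP E' im.
    rewrite (yau_dotc_supp (ltnSn i) im Di1E') add0r.
    have [->|E'A] := eqVneq E' A; first by rewrite flatA subrr mul0r.
    by rewrite IH // mulr0.
  have [DiE'|->] := yau_coefP E' (ltnW im); last by rewrite Di1E' subrr mul0r.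
  have E'A : E' != A.
    by apply/eqP => E'A; have := yau_A_gt0 im; rewrite -E'A Di1E' ltxx.
  rewrite Di1E' subr0; apply: mulr_ge0; first exact: ltW.
  rewrite dotc_yau_tail_S // addrA new0 // add0r.
  exact: dotc_yau_tail_ge0 im (leqnSn _) Di1E'.
have sumT : \sum_E' T E' = 0.
  by rewrite /T inter_dotcD yau_diff_inter_tail yau_diff_inter flatA subrr mul0r oppr0.
have := psumr_eq0P (fun E' _ => T_ge0 E') sumT (i := E) isT.
by move/eqP; rewrite /T cycleBE Di1E subr0 mulf_eq0 (gt_eqF DiE) => /eqP.
Qed.

Lemma yau_drop_numerics : D i.+1 A < D i A ->
  [/\ kA = 1, adj Z = 0, D i A - D i.+1 A = 1, Zm A = 1 & dotc Zm A = -1].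
Proof.
move=> drop.
have [_ DiZ _ _] := yau_bounds (ltnW im).
have [_ _ adjDi1 nzDi1] := yau_bounds im.
have [_ _ adjZm nzZm] := Zmin_bounds.
have ZmDi1 := Zmin_le_yau A im.
have Di12 := M_negdef nzDi1; have Zm2 := M_negdef nzZm.
have DiAZ := DiZ A; have Di1A := yau_A_gt0 im.
move: adjDi1 adjZm; rewrite adj_ZE !adjE => adjDi1 adjZm.
have [gap1 kA1] : Z A - D i.+1 A = 1 /\ - kA = -1.
  apply: mulz_eqN1; first lia.
  by have := KE_A_ge1; move: adjDi1; rewrite mulrN; nia.
have [ZmA Zm2'] : Zm A = Z A - 1 /\ inter M Zm Zm = -1.
  by move: adjZm; rewrite -(opprK kA) kA1 opprK mulr1; lia.
have [ZmA1 dotZmA] : Zm A = 1 /\ dotc Zm A = -1.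
  by apply: mulz_eqN1; [lia | rewrite -Zmin_self_inter].
by split; rewrite ?adj_ZE; lia.
Qed.

(* Otherwise [Zm <= D_i - D_{i+1}], and [D_{i+1} + Zm] would be a larger
   candidate for the Tyurina component of [D_i]. *)
Lemma yau_drop_last : D i.+1 A < D i A -> i.+2 = m.
Proof.
move=> drop; have [kA1 adjZ0 FA1 ZmA1 dotZmA] := yau_drop_numerics drop.
apply/eqP; rewrite eqn_leq im /= leqNgt; apply/negP => i2m.
have triv := yau_num_trivial_Zmin i2m.
have [Di10 _ adjDi1 _] := yau_bounds im.
have [Zm0 _ adjZm _] := Zmin_bounds.
have ZmDi1 E := Zmin_le_yau E im.
have ZmF E : Zm E <= D i E - D i.+1 E.
  suff : (Zm - (D i - D i.+1)) E <= 0 by rewrite !cycleBE; lia.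
  apply: le0_of_dotc_pos_ge0 => E'; rewrite !cycleBE => WE'.
  have ZmE' : 0 < Zm E' by have := yau_le (leqnSn i) im E'; have := Di10 E'; lia.
  have E'A : E' != A by apply/eqP => E'A; move: WE'; rewrite E'A ZmA1 FA1 subrr.
  have Di1E' : 0 < D i.+1 E' by apply: lt_le_trans ZmE' (ZmDi1 E').
  rewrite !dotcB Zmin_dotc_eq0 // (yau_dotc_supp (ltnSn i) im Di1E').
  by rewrite -inter_compC triv // !subrr.
pose X := D i.+1 + Zm.
have X0 j : 0 <= X j by rewrite cycleDE; have := Di10 j; have := Zm0 j; lia.
have XDi j : X j <= D i j by rewrite cycleDE; have := ZmF j; lia.
have Xtriv j : 0 < X j -> dotc (D i) j = 0.
  rewrite cycleDE => Xj; apply: yau_dotc_supp (ltnSn i) im _.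
  by have := ZmDi1 j; have := Zm0 j; lia.
have nzX : X != 0 by apply/cycle_neq0P; exists A; rewrite cycleDE; have := Di10 A; lia.
have adjX : adj X = adj Z.
  by rewrite adjD adjDi1 adjZm interC inter_num_trivial // adjZ0; ring.
by have := tyurina_maximal im X0 XDi Xtriv adjX nzX A; rewrite cycleDE; lia.
Qed.

Lemma tail_perp_step_drop : D i.+1 A < D i A -> tail_perp i.
Proof.
move=> drop; have [kA1 _ FA1 _ dotZmA] := yau_drop_numerics drop.
have Di1Zm : D i.+1 = Zm by rewrite -yau_last -(yau_drop_last drop).
move=> E EA DiE; rewrite dotc_yau_tail_S; last exact: ltnW.
rewrite dotc_yau_tail -(yau_drop_last drop) big_nat1.
have [Di1E|Di1E] := yau_coefP E im.
  rewrite (yau_dotc_supp (ltnSn i) im Di1E) add0r Di1Zm Zmin_dotc_eq0 //.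
  by rewrite -Di1Zm.
by apply: dotc_new_component_eq0 => //; rewrite FA1 kA1 Di1Zm dotZmA.
Qed.

Lemma tail_perp_step : tail_perp i.+1 -> tail_perp i.
Proof.
have := yau_le (leqnSn i) im A; rewrite le_eqVlt => /orP[/eqP flatA | drop] IH.
  exact: tail_perp_step_flat.
exact: tail_perp_step_drop.
Qed.

End Step.

Lemma tail_perp_all i : (i < m)%N -> tail_perp i.
Proof.
move=> im; have [d] : exists d, (i + d)%N = m.-1 by exists (m.-1 - i)%N; lia.
elim: d i im => [|d IH] i im id.
  by move: id; rewrite addn0 => ->; apply: tail_perp_last.
by apply: tail_perp_step; [lia | apply: IH; lia].
Qed.


Lemma yau_cycle_tail : yau_cycle m D = yau_tail 0.
Proof. by apply/ffunP => j; rewrite !ffunE big_mkord. Qed.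

Lemma yau_cycle_perp E : E != A -> dotc (yau_cycle m D) E = 0.
Proof.
move=> EA; rewrite yau_cycle_tail; apply: (tail_perp_all yau_size_gt0 EA).
by rewrite yau_head fundamental_gt0.
Qed.

Lemma inter_fundamental_yau_cycle : inter M Z (yau_cycle m D) = -2.
Proof.
rewrite yau_cycle_tail inter_yau_tail big_ltn ?yau_size_gt0 // yau_head Z_sq.
rewrite big_nat big1 ?addr0 // => j /andP[j_gt0 jm]; rewrite -yau_head.
by apply: yau_orthogonal => //; [exact: yau_size_gt0 | rewrite eq_sym -lt0n].
Qed.

Lemma yau_cycle_dotc_A : Z A * dotc (yau_cycle m D) A = -2.
Proof.
rewrite -inter_fundamental_yau_cycle interE (bigD1 A) //= big1 ?addr0 // => j jA.
by rewrite yau_cycle_perp // mulr0.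
Qed.

Lemma yau_cycle_canonical :
  is_canonical_cycle M g (fun j => pa M g Z * (yau_cycle m D j)%:~R).
Proof.
move=> i; set Y := yau_cycle m D.
have -> : \sum_j pa M g Z * (Y j)%:~R * (M j i)%:~R = pa M g Z * (dotc Y i)%:~R.
  by rewrite /dotc rmorph_sum /= mulr_sumr; apply: eq_bigr => j _; rewrite intrM mulrA.
have [->|iA] := eqVneq i A; last by rewrite yau_cycle_perp // KE_minus2 // mulr0 oppr0.
have ZAY : (Z A)%:~R * (dotc Y A)%:~R = -2 :> rat by rewrite -intrM yau_cycle_dotc_A.
rewrite paE adj_ZE rmorphB rmorphM /=.
set z := (Z A)%:~R in ZAY *; set y := (dotc Y A)%:~R in ZAY *; set k := kA%:~R.
have -> : (1 + (z * k - 2%:~R) / 2) * y = k * (z * y) / 2 by rewrite [2%:~R]/=; field.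
by rewrite ZAY; field.
Qed.

Lemma yau_numerically_gorenstein :
  num_gorenstein M g /\
  forall ZK, is_canonical_cycle M g ZK ->
    forall i, ZK i = pa M g Z * (yau_cycle m D i)%:~R.
Proof.
set ZY := fun j => pa M g Z * (yau_cycle m D j)%:~R.
have ZK_uniq ZK : is_canonical_cycle M g ZK -> forall i, ZK i = ZY i.
  move=> ZKc i; apply/eqP; rewrite -subr_eq0; apply/eqP; move: i.
  apply: (rat_cycle_eq0 (W := fun j => ZK j - ZY j)) => i.
  under eq_bigr do rewrite mulrBl.
  by rewrite sumrB ZKc yau_cycle_canonical subrr.
split=> //; split; first by exists ZY; exact: yau_cycle_canonical.
move=> ZK /ZK_uniq ZKE i; rewrite ZKE /ZY.
have [t adjZ] := adj_even (fun j => ltW (fundamental_gt0 j)).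
exists ((1 + t) * yau_cycle m D i).
by rewrite paE adjZ intrM rmorphD rmorphM /=; field.
Qed.

End Resolution.

Unset Implicit Arguments.

Theorem theorem3p5 (n : nat) (M : 'M[int]_n) (g : 'I_n -> nat)
    (Z Zm : icycle n) (m : nat) (D : nat -> icycle n) :
  exc_config M g ->
  is_fundamental_cycle M Z ->
  0 < pa M g Z ->
  inter M Z Z = -2 ->
  ess_irreducible M g Z ->
  is_Zmin M g Z Zm ->
  is_yau_seq M g Z Zm m D ->
  D m.-1 = Zm ->
  num_gorenstein M g /\
  (forall ZK, is_canonical_cycle M g ZK ->
     forall i, ZK i = pa M g Z * (yau_cycle m D i)%:~R).
Proof.
move=> [_ [Msym [Moff [negdef [conn min1]]]]] Zfund paZ Z_sq [A [_ notA2 ess]].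
move=> Zmin yau last.
have negdef' (X : icycle n) : X != 0 -> inter M X X < 0.
  by move=> /eqP nzX; apply: negdef => X0; apply: nzX; rewrite X0.
have Z_neq0 j : Z j != 0 by case: Zfund => -[_ supp _] _; rewrite supp.
have others_minus2 j : j != A -> minus2_curve M g j.
  move=> /negbTE jA; case: ess => [ZkA | Z_minus2].
    by have := Z_neq0 j; rewrite ZkA jA eqxx.
  by apply: Z_minus2; rewrite jA subr0.
exact: (yau_numerically_gorenstein Msym Moff conn negdef' Zfund yau notA2
  others_minus2 min1 paZ Z_sq Zmin last).
Qed.
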